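(* Let $\mathcal{Y}$ be a finite alphabet, $n\in\mathbb{N}$, and let $P_0,P_1\in\mathcal{P}(\mathcal{Y}^{\otimes n})$ be classical probability distributions, viewed as diagonal density matrices in the basis indexed by $\mathcal{Y}^{\times n}$. Then for every pair of density matrices $\rho,\sigma\in\mathrm{D}(\mathcal{Y}^{\otimes n})$ whose diagonals (in that basis) coincide with those of $P_0$ and $P_1$ respectively, and every $\varepsilon\in(0,1]$, one has $\xi^{\varepsilon}_{H}(\rho\|\sigma)\le\xi^{\varepsilon}_{H}(P_0\|P_1)$. Moreover, there exist classical $P_0,P_1$, a density matrix $\sigma$ with the same diagonal as $P_1$, and $\varepsilon\in(0,1)$ such that $\xi^{\varepsilon}_{H}(P_0\|\sigma)<\xi^{\varepsilon}_{H}(P_0\|P_1)$.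
   Context: $\mathcal{Y}^{\otimes n}$ denotes the complex Euclidean space with orthonormal basis indexed by sequences in $\mathcal{Y}^{\times n}$; $\mathrm{D}(\cdot)$ denotes density matrices (positive semidefinite, trace one) and $\mathcal{P}(\cdot)\subset\mathrm{D}(\cdot)$ those diagonal in the given basis (classical distributions). For $\rho\in\mathrm{D}(\mathcal{Y}^{\otimes n})$, $\sigma\succeq 0$ and $\varepsilon\in[0,1]$, the optimal type II error is $\xi^{\varepsilon}_{H}(\rho\|\sigma):=\min\{\mathrm{Tr}(\sigma A):\ 0\preceq A\preceq\mathbb{I},\ \mathrm{Tr}(\rho A)\ge 1-\varepsilon\}$. *)

From HB Require Import structures.
From mathcomp Require Import all_boot all_order all_algebra.
From mathcomp Require Import classical_sets reals.
From mathcomp Require Import complex.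
Set Implicit Arguments. Unset Strict Implicit. Unset Printing Implicit Defensive.
Import Order.TTheory GRing.Theory Num.Theory.
Local Open Scope ring_scope.
Local Open Scope classical_set_scope.

(* Dimension of Y^{\otimes n}: basis indexed by sequences in Y^{\times n}. *)
Definition dimYn (Y : finType) (n : nat) : nat := #|{: n.-tuple Y}|.

Section QHT.
Variable R : realType.
Local Notation C := (R[i]).

Definition adjmx (d : nat) (A : 'M[C]_d) : 'M[C]_d := (map_mx Num.conj A)^T.

(* positive semidefinite: Hermitian and v^* A v >= 0 (in the order of C,
   i.e. real and nonnegative) for every vector v *)
Definition psd (d : nat) (A : 'M[C]_d) : Prop :=
  adjmx A = A /\ forall v : 'cV[C]_d, 0 <= ((map_mx Num.conj v)^T *m A *m v) 0 0.

Definition loewner (d : nat) (A B : 'M[C]_d) : Prop := psd (B - A).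

Definition density (d : nat) (rho : 'M[C]_d) : Prop := psd rho /\ \tr rho = 1.

Definition classical (d : nat) (P : 'M[C]_d) : Prop :=
  density P /\ forall i j : 'I_d, i != j -> P i j = 0.

Definition is_test (d : nat) (A : 'M[C]_d) : Prop := loewner 0 A /\ loewner A 1%:M.

(* Tr(sigma A) is real for sigma, A psd; we take its real part and the
   infimum of the (nonempty, bounded below) set of values; the infimum is attained. *)
Definition xiH (d : nat) (eps : R) (rho sigma : 'M[C]_d) : R :=
  inf [set x : R | exists A : 'M[C]_d,
         [/\ is_test A, ((1 - eps)%:C)%C <= \tr (rho *m A) & x = complex.Re (\tr (sigma *m A))]].

End QHT.

From HB Require Import structures.
From mathcomp Require Import all_boot all_order all_algebra.
From mathcomp Require Import boolp classical_sets reals.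
From mathcomp Require Import complex.
From mathcomp Require Import ring.
Import Order.TTheory GRing.Theory Num.Theory.
Set Implicit Arguments. Unset Strict Implicit. Unset Printing Implicit Defensive.
Local Open Scope ring_scope.
Local Open Scope classical_set_scope.

(* Pinching: the diagonal part of a test A is again a test, and against
   operators whose diagonals agree with those of the diagonal P0 and P1 it has
   the same traces as A against P0 and P1.  Hence every type-II error
   achievable for (P0, P1) is achievable for (rho, sigma).
   For strictness take P0 = P1 = I/2 on a qubit and sigma = |+><+|: the test
   |-><-| has Tr(P0 A) = 1/2 and Tr(sigma A) = 0, while any test with
   Tr(P0 A) >= 1/2 has Tr(P1 A) >= 1/2. *)

Lemma inf_superset_le (R : realType) (S1 S2 : set R) :
  S2 `<=` S1 -> S2 !=set0 -> lbound S2 0 -> inf S1 <= inf S2.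
Proof.
move=> S21 S2n0 S2ge0.
(* without a lower bound, [inf S1] is the junk value [0] *)
have [S1lb|S1unb] := pselect (has_lbound S1); last first.
  by rewrite inf_out; [exact: lb_le_inf | case].
by apply: lb_le_inf => // x /S21; exact: ge_inf.
Qed.

Lemma inf_le0 (R : realType) (S : set R) : S 0 -> inf S <= 0.
Proof.
move=> S0; have [Slb|Sunb] := pselect (has_lbound S); first exact: ge_inf.
by rewrite inf_out //; case.
Qed.

Section PositiveMatrices.
Variable R : realType.
Local Notation C := R[i].

Definition ctrmx m n (A : 'M[C]_(m, n)) : 'M[C]_(n, m) := (map_mx Num.conj A)^T.

Lemma ctrmx_mul m n p (A : 'M[C]_(m, n)) (B : 'M[C]_(n, p)) :
  ctrmx (A *m B) = ctrmx B *m ctrmx A.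
Proof. by rewrite /ctrmx map_mxM trmx_mul. Qed.

Lemma ctrmxK m n (A : 'M[C]_(m, n)) : ctrmx (ctrmx A) = A.
Proof. by apply/matrixP => i j; rewrite !mxE conjCK. Qed.

Lemma ctrmxZ m n c (A : 'M[C]_(m, n)) : ctrmx (c *: A) = c^* *: ctrmx A.
Proof. by apply/matrixP => i j; rewrite !mxE rmorphM. Qed.

Lemma psd_diag_ge0 d (M : 'M[C]_d) k : psd M -> 0 <= M k k.
Proof.
case=> _ /(_ (delta_mx k 0)).
have -> : map_mx Num.conj (delta_mx k 0 : 'cV[C]_d) = delta_mx k 0.
  by apply/matrixP => i j; rewrite !mxE; case: (_ && _); rewrite ?conjC1 ?conjC0.
by rewrite trmx_delta -rowE -colE !mxE.
Qed.

Lemma psd_diag_mx d (c : 'rV[C]_d) : (forall k, 0 <= c 0 k) -> psd (diag_mx c).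
Proof.
move=> c_ge0; split.
  apply/matrixP => i j; rewrite !mxE eq_sym.
  by case: eqP => [->|_]; rewrite ?mulr0n ?conjC0 // !mulr1n geC0_conj.
move=> v; rewrite mul_mx_diag mxE; apply: sumr_ge0 => j _; rewrite !mxE.
by rewrite mulrC mulrA mulr_ge0 ?mul_conjC_ge0.
Qed.

Lemma psd_scale_outer d (w : 'cV[C]_d) c : 0 <= c -> psd (c *: (w *m ctrmx w)).
Proof.
move=> c_ge0; split.
  by rewrite [adjmx _]ctrmxZ ctrmx_mul ctrmxK geC0_conj.
move=> v; rewrite -/(ctrmx v) -scalemxAr -scalemxAl mxE mulr_ge0 //.
rewrite !mulmxA -(mulmxA (ctrmx v *m w)).
have -> : ctrmx w *m v = ctrmx (ctrmx v *m w) by rewrite ctrmx_mul ctrmxK.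
by rewrite !mxE big_ord1 !mxE mul_conjC_ge0.
Qed.

Lemma is_test1 d : is_test (1%:M : 'M[C]_d).
Proof.
rewrite /is_test /loewner subr0 subrr -diag_const_mx -(linear0 (@diag_mx _ d)).
by split; apply: psd_diag_mx => k; rewrite mxE ?ler01.
Qed.

Definition pinch d (A : 'M[C]_d) : 'M[C]_d := diag_mx (\row_k A k k).

Lemma psd_pinch d (M : 'M[C]_d) : psd M -> psd (pinch M).
Proof. by move=> psdM; apply: psd_diag_mx => k; rewrite mxE psd_diag_ge0. Qed.

Lemma pinch1B d (A : 'M[C]_d) : pinch (1%:M - A) = 1%:M - pinch A.
Proof.
apply/matrixP => i j; rewrite !mxE eqxx.
by case: (i == j); rewrite ?mulr1n ?mulr0n ?subr0.
Qed.

Lemma is_test_pinch d (A : 'M[C]_d) : is_test A -> is_test (pinch A).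
Proof.
rewrite /is_test /loewner !subr0 -pinch1B.
by case=> psdA psd1A; split; apply: psd_pinch.
Qed.

Lemma mxtrace_mul_pinch d (M A : 'M[C]_d) :
  \tr (M *m pinch A) = \sum_k M k k * A k k.
Proof. by rewrite mul_mx_diag; apply: eq_bigr => k _; rewrite !mxE. Qed.

Lemma mxtrace_mul_diag d (P A : 'M[C]_d) :
  is_diag_mx P -> \tr (P *m A) = \sum_k P k k * A k k.
Proof.
move=> /is_diag_mxP P_diag; apply: eq_bigr => i _; rewrite mxE (bigD1 i) //=.
by rewrite big1 ?addr0 // => j ji; rewrite P_diag ?mul0r // eq_sym.
Qed.

Lemma mxtrace_mul_pinch_diag d (M P A : 'M[C]_d) :
  is_diag_mx P -> (forall k, M k k = P k k) -> \tr (M *m pinch A) = \tr (P *m A).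
Proof.
move=> P_diag MP; rewrite mxtrace_mul_pinch mxtrace_mul_diag //.
by apply: eq_bigr => k _; rewrite MP.
Qed.

End PositiveMatrices.

Lemma classical_diag (R : realType) d (P : 'M[R[i]]_d) :
  classical P -> is_diag_mx P.
Proof. by case=> _ P_diag; apply/is_diag_mxP => i j ij; apply: P_diag. Qed.

Section TypeTwoErrors.
Variables (R : realType) (d : nat) (eps : R).
Local Notation C := R[i].

Definition type2_errors (rho sigma : 'M[C]_d) : set R :=
  [set x : R | exists A : 'M[C]_d,
     [/\ is_test A, ((1 - eps)%:C)%C <= \tr (rho *m A) & x = complex.Re (\tr (sigma *m A))]].

Lemma xiHE (rho sigma : 'M[C]_d) : xiH eps rho sigma = inf (type2_errors rho sigma).
Proof. by []. Qed.

Lemma type2_errors_pinch (P0 P1 rho sigma : 'M[C]_d) :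
  is_diag_mx P0 -> is_diag_mx P1 ->
  (forall k, rho k k = P0 k k) -> (forall k, sigma k k = P1 k k) ->
  type2_errors P0 P1 `<=` type2_errors rho sigma.
Proof.
move=> P0_diag P1_diag rhoP0 sigmaP1 x [A [testA P0A ->]].
exists (pinch A); split; first exact: is_test_pinch.
  by rewrite (mxtrace_mul_pinch_diag _ P0_diag).
by rewrite (mxtrace_mul_pinch_diag _ P1_diag).
Qed.

Lemma type2_errors_ge0 (rho P : 'M[C]_d) :
  psd P -> is_diag_mx P -> lbound (type2_errors rho P) 0.
Proof.
move=> psdP P_diag x [A [[psdA _] _ ->]].
have : 0 <= \tr (P *m A).
  rewrite mxtrace_mul_diag //; apply: sumr_ge0 => k _.
  by rewrite mulr_ge0 ?psd_diag_ge0 // -[A]subr0.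
by rewrite lecE => /andP[].
Qed.

Lemma type2_errors_trace (rho sigma : 'M[C]_d) :
  density rho -> 0 <= eps -> type2_errors rho sigma (complex.Re (\tr sigma)).
Proof.
move=> [_ tr_rho] eps_ge0; exists 1%:M; split; rewrite ?mulmx1 //.
  exact: is_test1.
by rewrite tr_rho lecE /= eqxx /= gerBl.
Qed.

Lemma xiH_pinch (P0 P1 rho sigma : 'M[C]_d) :
  classical P0 -> classical P1 ->
  (forall k, rho k k = P0 k k) -> (forall k, sigma k k = P1 k k) -> 0 <= eps ->
  xiH eps rho sigma <= xiH eps P0 P1.
Proof.
move=> P0c P1c rhoP0 sigmaP1 eps_ge0; rewrite !xiHE; apply: inf_superset_le.
- exact: type2_errors_pinch (classical_diag P0c) (classical_diag P1c) rhoP0 sigmaP1.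
- by case: P0c => P0dens _; eexists; exact: type2_errors_trace.
- by apply: type2_errors_ge0 (classical_diag P1c); case: P1c => -[].
Qed.

Lemma xiH_self_ge (rho : 'M[C]_d) :
  density rho -> 0 <= eps -> 1 - eps <= xiH eps rho rho.
Proof.
move=> rho_dens eps_ge0; rewrite xiHE; apply: lb_le_inf.
  by eexists; exact: type2_errors_trace.
by move=> x [A [_ + ->]]; rewrite lecE => /andP[].
Qed.

Lemma xiH_le0 (rho sigma A : 'M[C]_d) :
  is_test A -> ((1 - eps)%:C)%C <= \tr (rho *m A) -> \tr (sigma *m A) = 0 ->
  xiH eps rho sigma <= 0.
Proof.
by move=> testA rhoA sigmaA; rewrite xiHE; apply: inf_le0; exists A; rewrite sigmaA.
Qed.

End TypeTwoErrors.

Section QubitExample.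
Variable R : realType.
Local Notation C := R[i].

Let half : C := 2^-1.

Lemma half_add_half : half + half = 1.
Proof. by rewrite /half; field. Qed.

Lemma complex_one_sub_half : ((1 - 2^-1 : R)%:C)%C = half.
Proof. by rewrite rmorphB rmorph1 fmorphV rmorph_nat /half; field. Qed.

Let mixed : 'M[C]_2 := half%:M.
(* [plus] and [minus] are sqrt 2 |+> and sqrt 2 |->. *)
Let plus : 'cV[C]_2 := const_mx 1.
Let minus : 'cV[C]_2 := \col_i (if i == 0 then 1 else -1).
Let proj_plus : 'M[C]_2 := half *: (plus *m ctrmx plus).
Let proj_minus : 'M[C]_2 := half *: (minus *m ctrmx minus).

Lemma plus_minus_orth : ctrmx plus *m minus = 0.
Proof.
apply/matrixP => i j; rewrite !ord1 !mxE big_ord_recr big_ord1 /= !mxE.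
by rewrite rmorph1 !mul1r addrN.
Qed.

Lemma proj_plusE i j : proj_plus i j = half.
Proof. by rewrite !mxE big_ord1 !mxE rmorph1 !mulr1. Qed.

Lemma proj_minusE (i j : 'I_2) : proj_minus i j = half * (if i == j then 1 else -1).
Proof.
rewrite !mxE big_ord1 !mxE.
by case: i => [[|[|//]]] ?; case: j => [[|[|//]]] ? /=; rewrite ?rmorph1 ?rmorphN1; ring.
Qed.

Lemma proj_plus_add_minus : proj_plus + proj_minus = 1%:M.
Proof.
apply/matrixP => i j; rewrite [LHS]mxE [RHS]mxE proj_plusE proj_minusE eq_sym.
by case: eqP => _; rewrite ?mulr1 ?mulrN1 ?subrr // half_add_half.
Qed.

Lemma proj_plus_mul_minus : proj_plus *m proj_minus = 0.
Proof.
by rewrite -scalemxAl -scalemxAr !mulmxA -(mulmxA plus) plus_minus_orth mulmx0 mul0mx !scaler0.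
Qed.

Lemma half_ge0 : 0 <= half.
Proof. by rewrite invr_ge0 ler0n. Qed.

Lemma classical_mixed : classical mixed.
Proof.
split; last by move=> i j /negbTE ij; rewrite mxE ij.
split; last by rewrite mxtrace_scalar mulr2n half_add_half.
by rewrite /mixed -diag_const_mx; apply: psd_diag_mx => k; rewrite mxE half_ge0.
Qed.

Lemma density_proj_plus : density proj_plus.
Proof.
split; first exact: psd_scale_outer half_ge0.
rewrite /mxtrace big_ord_recr big_ord1 !proj_plusE; exact: half_add_half.
Qed.

Lemma is_test_proj_minus : is_test proj_minus.
Proof.
split; rewrite /loewner ?subr0; first exact: psd_scale_outer half_ge0.
by rewrite -proj_plus_add_minus addrK; exact: psd_scale_outer half_ge0.
Qed.

Lemma mxtrace_mixed_proj_minus : \tr (mixed *m proj_minus) = half.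
Proof.
rewrite mul_scalar_mx mxtraceZ /mxtrace big_ord_recr big_ord1 !proj_minusE /=.
by rewrite !mulr1 half_add_half mulr1.
Qed.

Lemma qubit_counterexample : exists (P0 P1 sigma : 'M[C]_2) (eps : R),
  [/\ classical P0, classical P1, density sigma, (forall k, sigma k k = P1 k k)
     & 0 < eps < 1] /\ xiH eps P0 sigma < xiH eps P0 P1.
Proof.
have /andP[half_gt0 half_lt1] : 0 < (2^-1 : R) < 1 by rewrite invr_gt0 ltr0n invf_lt1 ?ltr1n.
have proj_minus_accepts : ((1 - 2^-1 : R)%:C)%C <= \tr (mixed *m proj_minus).
  by rewrite complex_one_sub_half mxtrace_mixed_proj_minus.
have proj_plus_diag k : proj_plus k k = mixed k k by rewrite proj_plusE mxE eqxx.
exists mixed, mixed, proj_plus, 2^-1; split.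
  split=> //; [exact: classical_mixed | exact: classical_mixed | exact: density_proj_plus |].
  by rewrite half_gt0 half_lt1.
apply: (le_lt_trans (xiH_le0 is_test_proj_minus proj_minus_accepts _)).
  by rewrite proj_plus_mul_minus mxtrace0.
apply: (lt_le_trans _ (xiH_self_ge _ (ltW half_gt0))); last by case: classical_mixed.
by rewrite subr_gt0.
Qed.

End QubitExample.

Theorem proposition1 (R : realType) :
  (forall (Y : finType) (n : nat) (P0 P1 rho sigma : 'M[R[i]]_(dimYn Y n)) (eps : R),
     classical P0 -> classical P1 -> density rho -> density sigma ->
     (forall k, rho k k = P0 k k) -> (forall k, sigma k k = P1 k k) ->
     0 < eps <= 1 ->
     xiH eps rho sigma <= xiH eps P0 P1)
  /\
  (exists (Y : finType) (n : nat) (P0 P1 sigma : 'M[R[i]]_(dimYn Y n)) (eps : R),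
     [/\ classical P0, classical P1, density sigma, (forall k, sigma k k = P1 k k)
        & 0 < eps < 1] /\ xiH eps P0 sigma < xiH eps P0 P1).
Proof.
split.
  move=> Y n P0 P1 rho sigma eps P0c P1c _ _ rhoP0 sigmaP1 /andP[/ltW eps_ge0 _].
  exact: xiH_pinch.
exists bool, 1%N.
have -> : dimYn bool 1 = 2%N by rewrite /dimYn card_tuple card_bool.
exact: qubit_counterexample.
Qed.
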